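(* Let $L$ be a slim semimodular lattice with a fixed planar diagram, and let $K$ be a cover-preserving $\{0,1\}$-sublattice of $L$ (with the inherited subdiagram). Then $K$ is a slim semimodular lattice, $K$ is a region of $L$, and $K=\mathrm{rside}_L(C_l(K))\cap \mathrm{lside}_L(C_r(K))$.
   Context: All lattices are finite. $\mathrm{J}(L)$ is the set of nonzero join-irreducible elements; $L$ is slim if $\mathrm J(L)$ is the union of two chains (slim lattices are planar). A cover-preserving $\{0,1\}$-sublattice of $L$ is a sublattice containing $0_L,1_L$ such that $x\prec y$ in $K$ implies $x\prec y$ in $L$. For a fixed planar diagram, $C_l(\cdot)$ and $C_r(\cdot)$ denote the left and right boundary chains; for $K$ these are taken in the subdiagram of $K$ (they are maximal chains of $L$). For a maximal chain $C$ of $L$, $\mathrm{lside}_L(C)$ (resp. $\mathrm{rside}_L(C)$) is the set of elements of $L$ lying on the left (resp. right) of $C$ in the diagram, elements of $C$ included. A region of $L$ is a set of the form $\mathrm{rside}_L(C_1)\cap\mathrm{lside}_L(C_2)$ where $C_1,C_2$ are maximal chains with $C_1\subseteq\mathrm{lside}_L(C_2)$. *)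

From HB Require Import structures.
From mathcomp Require Import all_boot all_order.
Set Implicit Arguments. Unset Strict Implicit. Unset Printing Implicit Defensive.
Import Order.Theory.
Local Open Scope order_scope.

Section SlimDefs.
Context {disp : Order.disp_t} {L : finTBLatticeType disp}.

Definition incomp (x y : L) : bool := ~~ (x <= y) && ~~ (y <= x).

(* A (fixed) planar diagram of L, encoded up to similarity by its
   "left of" relation on incomparable pairs (Kelly--Rival):
   [lft x y] means "x lies to the left of y" in the diagram.  The axioms say
   that lft relates exactly the incomparable pairs, in exactly one direction,
   and that (<= or left-of) and (<= or right-of) are both transitive, i.e.
   they form a 2-dimensional realizer; such pairs correspond exactly to the
   planar diagrams of L up to similarity. *)
Definition planar_diagram (lft : rel L) : Prop :=
  [/\ forall x y, lft x y -> incomp x y,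
      forall x y, incomp x y -> lft x y || lft y x,
      forall x y, lft x y -> ~~ lft y x,
      forall x y z, (x <= y) || lft x y -> (y <= z) || lft y z ->
                    (x <= z) || lft x z &
      forall x y z, (x <= y) || lft y x -> (y <= z) || lft z y ->
                    (x <= z) || lft z x].

Definition chain (A : {set L}) : Prop :=
  {in A &, forall x y, (x <= y) || (y <= x)}.

Definition maximal_chain (C : {set L}) : Prop :=
  chain C /\ forall D : {set L}, chain D -> C \subset D -> D = C.

Definition cover_in (S : {set L}) (x y : L) : Prop :=
  [/\ x \in S, y \in S, x < y &
      forall z, z \in S -> x < z -> z < y -> False].

Definition sublattice01 (K : {set L}) : Prop :=
  [/\ \bot \in K, \top \in K,
      {in K &, forall x y, x `&` y \in K} &
      {in K &, forall x y, x `|` y \in K}].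

Definition cover_preserving (K : {set L}) : Prop :=
  forall x y, cover_in K x y -> cover_in [set: L] x y.

(* (upper) semimodularity of a sublattice S (joins computed in L = in S) *)
Definition semimodular_in (S : {set L}) : Prop :=
  forall a b c, a \in S -> b \in S -> c \in S -> cover_in S a b ->
    a `|` c = b `|` c \/ cover_in S (a `|` c) (b `|` c).

Definition join_irr_in (S : {set L}) (x : L) : Prop :=
  [/\ x \in S, x != \bot &
      forall y z, y \in S -> z \in S -> x = y `|` z -> x = y \/ x = z].

Definition slim_in (S : {set L}) : Prop :=
  exists C1 C2 : {set L},
    [/\ C1 \subset S, C2 \subset S, chain C1, chain C2 &
        forall x, join_irr_in S x <-> x \in C1 :|: C2].

Definition lside (lft : rel L) (C : {set L}) : {set L} :=
  [set x | (x \in C) || [exists c in C, lft x c]].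
Definition rside (lft : rel L) (C : {set L}) : {set L} :=
  [set x | (x \in C) || [exists c in C, lft c x]].

Definition region (lft : rel L) (R : {set L}) : Prop :=
  exists C1 C2 : {set L},
    [/\ maximal_chain C1, maximal_chain C2, C1 \subset lside lft C2 &
        R = rside lft C1 :&: lside lft C2].

Definition Cl (lft : rel L) (K : {set L}) : {set L} :=
  [set x in K | ~~ [exists y in K, lft y x]].
Definition Cr (lft : rel L) (K : {set L}) : {set L} :=
  [set x in K | ~~ [exists y in K, lft x y]].

End SlimDefs.

(* The left boundary chain Cl(K) of the subdiagram of K runs from 0 to 1, and
   consecutive elements of it are covers in K: a leftmost element of K strictly
   between them would itself lie on Cl(K).  By cover preservation Cl(K), and
   symmetrically Cr(K), is a maximal chain of L, and K lies between them.
   Conversely, let x lie strictly between Cl(K) and Cr(K) without being the join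
   of two other elements of K (e.g. x not in K, or x join-irreducible in K).
   Going down from the boundary points on either side of x gives covers
   p1 ≺ u and p2 ≺ v of L inside K with u left of x and v right of x.  By
   semimodularity q = p1 ∨ p2 is covered by u ∨ q and v ∨ q, which still lie on
   either side of x > q.  These three elements pairwise meet in q, so
   join-irreducibles of L below them that are not below q form a three-element
   antichain, which a slim lattice does not have.  Hence K is the region between
   its boundary chains and its join-irreducibles lie on them, so K is slim;
   semimodularity passes to K because covers of K are covers of L. *)

From HB Require Import structures.
From mathcomp Require Import all_boot all_order.
Import Order.Theory.
Local Open Scope order_scope.

Lemma ex_minimal_wrt (T : finType) (r : rel T) (mu : T -> nat) (P : pred T) (x0 : T) :
  (forall x y, r x y -> mu x < mu y)%N -> P x0 ->
  exists2 m, P m & forall y, P y -> ~~ r y m.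
Proof.
move=> mu_mono Px0; have [m Pm minm] := arg_minnP mu Px0.
by exists m => // y Py; apply/negP => /mu_mono; rewrite ltnNge minm.
Qed.

Section FinPOrder.
Context {disp : Order.disp_t} {T : finPOrderType disp}.

Lemma ex_minimal_in (S : {set T}) (x0 : T) :
  x0 \in S -> exists2 m, m \in S & forall y, y \in S -> ~~ (y < m).
Proof.
apply: (@ex_minimal_wrt _ _ (fun y => #|[set t | t < y]|)) => x y xy.
apply/proper_card/properP; split; last by exists x; rewrite !inE ?ltxx.
by apply/subsetP => t; rewrite !inE => /lt_trans; apply.
Qed.

Lemma ex_maximal_in (S : {set T}) (x0 : T) :
  x0 \in S -> exists2 m, m \in S & forall y, y \in S -> ~~ (m < y).
Proof.
apply: (@ex_minimal_wrt _ (fun y m => m < y) (fun y => #|[set t | y < t]|)).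
move=> x y yx; apply/proper_card/properP; split; last by exists x; rewrite !inE ?ltxx.
by apply/subsetP => t; rewrite !inE; apply: lt_trans.
Qed.

End FinPOrder.

Section FinLattice.
Context {disp : Order.disp_t} {L : finTBLatticeType disp}.

Definition join_indecomposable (K : {set L}) (x : L) : Prop :=
  forall y z, y \in K -> z \in K -> x = y `|` z -> x = y \/ x = z.

Definition join_irrb (S : {set L}) (x : L) : bool :=
  [&& x \in S, x != \bot & [forall y in S, forall z in S,
     (x == y `|` z) ==> (x == y) || (x == z)]].

Lemma join_irr_inP (S : {set L}) (x : L) : reflect (join_irr_in S x) (join_irrb S x).
Proof.
rewrite /join_irrb /join_irr_in.
apply: (iffP and3P) => -[xS x0 irr]; split => //.
  move=> y z yS zS xyz; move/forall_inP: irr => /(_ y yS) /forall_inP => /(_ z zS).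
  by rewrite -xyz eqxx => /orP[] /eqP; [left|right].
apply/forall_inP => y yS; apply/forall_inP => z zS; apply/implyP => /eqP xyz.
by case: (irr y z yS zS xyz) => <-; rewrite eqxx ?orbT.
Qed.

Lemma join_irr_below {y q : L} :
  ~~ (y <= q) -> exists j, [/\ join_irr_in [set: L] j, j <= y & ~~ (j <= q)].
Proof.
move=> yq; have [|m] := @ex_minimal_in _ _ [set t | (t <= y) && ~~ (t <= q)] y.
  by rewrite inE lexx.
rewrite inE => /andP[my mq] minm; exists m; split=> //; split=> //.
  by apply: contraNneq mq => ->; rewrite le0x.
have below_q t : t < m -> t <= q.
  move=> tm; have tmy := le_trans (ltW tm) my.
  by apply: contraTT tm => tq; apply: minm; rewrite inE tmy.
move=> s t _ _ mst; have [<-|ms] := eqVneq s m; first by left.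
have [<-|mt] := eqVneq t m; first by right.
have sm : s < m by rewrite lt_neqAle ms mst leUl.
have tm : t < m by rewrite lt_neqAle mt mst leUr.
by move: mq; rewrite {1}mst leUx !below_q.
Qed.

Lemma cover_meet_eq (q u x : L) :
  cover_in [set: L] q u -> q <= x -> ~~ (u <= x) -> u `&` x = q.
Proof.
case=> _ _ qu qu_cover qx ux; apply/eqP; rewrite eq_le lexI (ltW qu) qx !andbT.
apply: contraT => uxq; exfalso; apply: (qu_cover (u `&` x)); rewrite ?in_setT //.
  by rewrite lt_neqAle lexI (ltW qu) qx !andbT; apply: contraNneq uxq => <-.
by rewrite lt_neqAle leIl andbT; apply: contraNneq ux => <-; rewrite leIr.
Qed.

Lemma maximal_chain_of_cover_preserving (C : {set L}) :
  chain C -> \bot \in C -> \top \in C -> cover_preserving C -> maximal_chain C.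
Proof.
move=> chC C0 C1 cpC; split=> // D chD CD; apply/eqP; rewrite eqEsubset CD andbT.
apply/subsetP => d dD; apply: contraT => dC; exfalso.
have [|x] := @ex_maximal_in _ _ [set c in C | c <= d] \bot; first by rewrite inE C0 le0x.
rewrite inE => /andP[xC xd] maxx.
have [|z] := @ex_minimal_in _ _ [set c in C | d <= c] \top; first by rewrite inE C1 lex1.
rewrite inE => /andP[zC dz] minz.
have xd' : x < d by rewrite lt_neqAle xd andbT; apply: contraNneq dC => <-.
have dz' : d < z by rewrite lt_neqAle dz andbT; apply: contraNneq dC => ->.
have xz : cover_in C x z.
  split=> //; first exact: lt_trans xd' dz'.
  move=> c cC xc cz; case/orP: (chD c d (subsetP CD c cC) dD) => [cd|dc].
    by move: (maxx c); rewrite inE cC cd xc => /(_ isT).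
  by move: (minz c); rewrite inE cC dc cz => /(_ isT).
by case: (cpC x z xz) => _ _ _ /(_ d (in_setT d) xd' dz').
Qed.

Lemma maximal_chain_incomp {C : {set L}} {x : L} :
  maximal_chain C -> x \notin C -> exists2 c, c \in C & incomp c x.
Proof.
case=> chC maxC xC; apply/exists_inP; apply: contraR xC => /exists_inPn comp.
have chCx : chain (x |: C).
  move=> a b /setU1P[->|aC] /setU1P[->|bC]; rewrite ?lexx //.
  - by move: (comp b bC); rewrite negb_and !negbK orbC.
  - by move: (comp a aC); rewrite negb_and !negbK.
  - exact: chC.
by rewrite -(maxC _ chCx (subsetUr _ _)) setU11.
Qed.

Section Slim.
Hypothesis slimL : slim_in [set: L].

Lemma slim_no_antichain3 {a b c : L} :
  join_irr_in [set: L] a -> join_irr_in [set: L] b -> join_irr_in [set: L] c ->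
  incomp a b -> incomp a c -> incomp b c -> False.
Proof.
have [C1 [C2 [_ _ ch1 ch2 JC]]] := slimL.
have side u v : join_irr_in [set: L] u -> join_irr_in [set: L] v -> incomp u v ->
    (u \in C1) != (v \in C1).
  move=> /JC uC /JC vC; rewrite /incomp -negb_or; apply: contra => /eqP uvC.
  have [u1|u1] := boolP (u \in C1); first by apply: ch1; rewrite // -uvC.
  move: uC vC; rewrite !in_setU -uvC (negbTE u1) /=; exact: ch2.
move=> Ja Jb Jc ab ac bc.
move: (side _ _ Ja Jb ab) (side _ _ Ja Jc ac) (side _ _ Jb Jc bc).
by case: (a \in C1); case: (b \in C1); case: (c \in C1).
Qed.

Lemma slim_no_meet3 (q a b c : L) :
  a `&` b = q -> a `&` c = q -> b `&` c = q ->
  ~~ (a <= q) -> ~~ (b <= q) -> ~~ (c <= q) -> False.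
Proof.
move=> ab ac bc aq bq cq.
have [ja [Ja jaa jaq]] := join_irr_below aq.
have [jb [Jb jbb jbq]] := join_irr_below bq.
have [jc [Jc jcc jcq]] := join_irr_below cq.
have incomp_below j k u v : j <= u -> k <= v -> u `&` v = q ->
    ~~ (j <= q) -> ~~ (k <= q) -> incomp j k.
  move=> ju kv uv jq kq; apply/andP; split.
  - by apply: contra jq => jk; rewrite -uv lexI ju (le_trans jk kv).
  - by apply: contra kq => kj; rewrite -uv lexI kv (le_trans kj ju).
exact: (slim_no_antichain3 Ja Jb Jc (incomp_below _ _ _ _ jaa jbb ab jaq jbq)
  (incomp_below _ _ _ _ jaa jcc ac jaq jcq) (incomp_below _ _ _ _ jbb jcc bc jbq jcq)).
Qed.

End Slim.

End FinLattice.

Section Planar.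
Context {disp : Order.disp_t} {L : finTBLatticeType disp}.
Context {lft : rel L} (pd : planar_diagram lft).

Lemma lft_incomp {x y : L} : lft x y -> incomp x y.
Proof. by case: pd => h _ _ _ _; apply: h. Qed.

Lemma lft_asym {x y : L} : lft x y -> ~~ lft y x.
Proof. by case: pd => _ _ h _ _; apply: h. Qed.

Lemma lft_total {x y : L} : incomp x y -> lft x y || lft y x.
Proof. by case: pd => _ h _ _ _; apply: h. Qed.

Lemma lft_le_up_l {p y r : L} : lft p y -> p <= r -> (y <= r) || lft r y.
Proof. by case: pd => _ _ _ _ h py pr; apply: (h y p r); rewrite ?py ?pr ?orbT. Qed.

Lemma lft_le_up_r {p y r : L} : lft p y -> y <= r -> (p <= r) || lft p r.
Proof. by case: pd => _ _ _ h _ py yr; apply: (h p y r); rewrite ?py ?yr ?orbT. Qed.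

Lemma lft_le_down_l {p y r : L} : lft p y -> r <= p -> (r <= y) || lft r y.
Proof. by case: pd => _ _ _ h _ py rp; apply: (h r p y); rewrite ?py ?rp ?orbT. Qed.

(* [(<=) || lft] is a linear order (the left-to-right linear extension), and
   these sets are its down-sets; so [lft] has no infinite descending chains. *)
Lemma card_leftof_lt {w y : L} :
  lft w y -> (#|[set t | (t <= w)%O || lft t w]| < #|[set t | (t <= y)%O || lft t y]|)%N.
Proof.
move=> wy; apply/proper_card/properP; split.
  apply/subsetP => t; rewrite !inE; case: pd => _ _ _ h _ tw.
  by apply: (h t w y tw); rewrite wy orbT.
exists y; rewrite !inE ?lexx //; have /andP[_ yw] := lft_incomp wy.
by rewrite negb_or yw (negbTE (lft_asym wy)).
Qed.

Context (slimL : slim_in [set: L]).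

Lemma slim_no_lft_between_covers {q u v x : L} :
  cover_in [set: L] q u -> cover_in [set: L] q v -> q < x -> lft u x -> lft x v -> False.
Proof.
move=> qu qv qx ux xv; have [_ _ qu_lt _] := qu; have [_ _ qv_lt qv_cover] := qv.
have /andP[nux _] := lft_incomp ux; have /andP[_ nvx] := lft_incomp xv.
have nuv : ~~ (u <= v).
  apply/negP => uv; have [euv|neuv] := eqVneq u v.
    by rewrite euv in ux; move: (lft_asym ux); rewrite xv.
  by apply: (qv_cover u (in_setT u) qu_lt); rewrite lt_neqAle neuv uv.
apply: (@slim_no_meet3 _ _ slimL q u v x).
- exact: cover_meet_eq qu (ltW qv_lt) nuv.
- exact: cover_meet_eq qu (ltW qx) nux.
- exact: cover_meet_eq qv (ltW qx) nvx.
- by rewrite (lt_geF qu_lt).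
- by rewrite (lt_geF qv_lt).
- by rewrite (lt_geF qx).
Qed.

Section SubDiagram.
Context {K : {set L}}.

Lemma Cl_subset : Cl lft K \subset K.
Proof. by apply/subsetP => x; rewrite inE => /andP[]. Qed.

Lemma Cl_lftF {z w : L} : z \in Cl lft K -> w \in K -> lft w z = false.
Proof. by rewrite inE => /andP[_ /exists_inPn noleft] /noleft /negbTE. Qed.

Lemma Cl_chain : chain (Cl lft K).
Proof.
move=> x y xC yC; apply: contraT; rewrite negb_or -/(incomp x y) => /lft_total.
have /(subsetP Cl_subset) xK := xC; have /(subsetP Cl_subset) yK := yC.
by rewrite (Cl_lftF yC xK) (Cl_lftF xC yK).
Qed.

Lemma comparable_in_Cl (x : L) :
  x \in K -> (forall y, (x <= y) || (y <= x)) -> x \in Cl lft K.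
Proof.
move=> xK comp; rewrite inE xK; apply/exists_inP => -[y _ /lft_incomp].
by rewrite /incomp -negb_or orbC comp.
Qed.

Lemma Cl_cover_in {x z : L} : cover_in (Cl lft K) x z -> cover_in K x z.
Proof.
case=> xC zC xz noC; have /(subsetP Cl_subset) xK := xC.
have /(subsetP Cl_subset) zK := zC; split=> // y0 y0K xy0 y0z.
have [|y /and3P[yK xy yz] miny] :=
  @ex_minimal_wrt _ lft _ (fun y => [&& y \in K, x < y & y < z]) y0 (@card_leftof_lt).
  by rewrite y0K xy0 y0z.
apply: (noC y) => //; rewrite inE yK; apply/exists_inP => -[w wK wy].
have /andP[nwy nyw] := lft_incomp wy.
have wz : w <= z by case/orP: (lft_le_up_r wy (ltW yz)); rewrite ?(Cl_lftF zC wK).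
have [xw|nxw] := boolP (x <= w).
  have xw' : x < w by rewrite lt_neqAle xw andbT; apply: contraNneq nwy => <-; exact: ltW xy.
  have wz' : w < z by rewrite lt_neqAle wz andbT; apply: contraNneq nyw => ->; exact: ltW yz.
  by move: (miny w); rewrite wK xw' wz' wy => /(_ isT).
have nwx : ~~ (w <= x) by apply: contra nwy => wx; exact: le_trans wx (ltW xy).
have : incomp x w by rewrite /incomp nxw nwx.
move/lft_total; rewrite (Cl_lftF xC wK) orbF => xw.
by case/orP: (lft_le_up_l xw (ltW xy)); rewrite ?(negbTE nwy) ?(negbTE (lft_asym wy)).
Qed.

Context (subK : sublattice01 K) (cpK : cover_preserving K).

Lemma Cl_maximal_chain : maximal_chain (Cl lft K).
Proof.
have [K0 K1 _ _] := subK.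
apply: maximal_chain_of_cover_preserving.
- exact: Cl_chain.
- by apply: comparable_in_Cl => // y; rewrite le0x.
- by apply: comparable_in_Cl => // y; rewrite lex1 orbT.
- by move=> x z /Cl_cover_in /cpK.
Qed.

Lemma sublattice_subset_rside_Cl : K \subset rside lft (Cl lft K).
Proof.
apply/subsetP => k kK; rewrite inE; have [//|kC] := boolP (k \in Cl lft K).
have [c cC ck] := maximal_chain_incomp Cl_maximal_chain kC.
apply/exists_inP; exists c => //.
by case/orP: (lft_total ck); rewrite ?(Cl_lftF cC kK).
Qed.

Lemma lft_sublattice_cover {x c : L} :
  c \in K -> lft c x ->
  exists u q, [/\ u \in K, q \in K, cover_in [set: L] q u, q <= x & lft u x].
Proof.
have [K0 _ _ _] := subK; move=> cK cx.
have [|u] := @ex_minimal_in _ _ [set y in K | (y <= c) && ~~ (y <= x)] c.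
  by rewrite inE cK lexx; case/andP: (lft_incomp cx).
rewrite inE => /and3P[uK uc nux] minu.
have ux : lft u x by case/orP: (lft_le_down_l cx uc); rewrite ?(negbTE nux).
have [|q] := @ex_maximal_in _ _ [set y in K | y < u] \bot.
  by rewrite inE K0 lt0x; apply: contraNneq nux => ->; exact: le0x.
rewrite inE => /andP[qK qu] maxq; exists u, q; split=> //.
  apply: cpK; split=> // y yK qy yu.
  by move: (maxq y); rewrite inE yK yu qy => /(_ isT).
apply: contraT => nqx; move: (minu q).
by rewrite inE qK nqx qu (le_trans (ltW qu) uc) => /(_ isT).
Qed.

Context (smL : semimodular_in [set: L]).

Lemma semimodular_join_lft {w p q x : L} :
  w \in K -> q \in K -> cover_in [set: L] p w -> p <= q -> q < x -> lft w x ->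
  join_indecomposable K x -> cover_in [set: L] q (w `|` q) /\ lft (w `|` q) x.
Proof.
move=> wK qK pw pq qx wx irrx; have /andP[nwx nxw] := lft_incomp wx.
have := smL p w q (in_setT p) (in_setT w) (in_setT q) pw.
rewrite (join_r pq) => -[qwq|qw].
  have wq : w <= q by rewrite qwq leUl.
  by rewrite (le_trans wq (ltW qx)) in nwx.
split=> //; case/orP: (lft_le_up_l wx (leUl w q)) => // xwq; exfalso.
have [xe|xne] := eqVneq x (w `|` q).
  case: (irrx w q wK qK xe) => [xw|xq]; first by rewrite xw lexx in nxw.
  by rewrite xq ltxx in qx.
by case: qw => _ _ _ /(_ x (in_setT x) qx); apply; rewrite lt_neqAle xne xwq.
Qed.

End SubDiagram.

End Planar.

Lemma planar_diagram_flip {disp : Order.disp_t} {L : finTBLatticeType disp} {lft : rel L} :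
  planar_diagram lft -> planar_diagram (fun x y => lft y x).
Proof.
case=> lft_inc inc_lft asym trans_l trans_r; split=> //.
- by move=> x y /lft_inc; rewrite /incomp andbC.
- by move=> x y /inc_lft; rewrite orbC.
- by move=> x y /asym.
Qed.

Section CoverPreservingSublattice.
Context {disp : Order.disp_t} {L : finTBLatticeType disp} {K : {set L}}.
Context (subK : sublattice01 K) (cpK : cover_preserving K) (smL : semimodular_in [set: L]).

Lemma sublattice_semimodular : semimodular_in K.
Proof.
have [_ _ _ KU] := subK; move=> a b c aK bK cK ab.
have [|[_ _ ac_bc cov]] := smL a b c (in_setT a) (in_setT b) (in_setT c) (cpK a b ab).
  by left.
by right; split; rewrite ?KU // => z _; apply: cov.
Qed.

Context (slimL : slim_in [set: L]) {lft : rel L} (pd : planar_diagram lft).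

Lemma join_indecomposable_not_lft_between {x c d : L} :
  c \in K -> d \in K -> lft c x -> lft x d -> join_indecomposable K x -> False.
Proof.
move=> cK dK cx xd irrx; have pd' := planar_diagram_flip pd; have [_ _ _ KU] := subK.
have [u [p1 [uK p1K p1u p1x ux]]] := lft_sublattice_cover pd subK cpK cK cx.
have [v [p2 [vK p2K p2v p2x xv]]] := lft_sublattice_cover pd' subK cpK dK xd.
have qK : p1 `|` p2 \in K by apply: KU.
have qx : p1 `|` p2 < x.
  rewrite lt_neqAle leUx p1x p2x !andbT; apply/negP => /eqP/esym qe.
  have [_ _ /ltW p1u' _] := p1u; have [_ _ /ltW p2v' _] := p2v.
  have /andP[_ nxu] := lft_incomp pd ux; have /andP[_ nxv] := lft_incomp pd' xv.
  by case: (irrx p1 p2 p1K p2K qe) => xe; rewrite xe ?p1u' ?p2v' in nxu nxv.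
have [cU lU] := semimodular_join_lft pd smL uK qK p1u (leUl _ _) qx ux irrx.
have [cV lV] := semimodular_join_lft pd' smL vK qK p2v (leUr _ _) qx xv irrx.
exact: (slim_no_lft_between_covers pd slimL cU cV qx lU lV).
Qed.

Lemma sublattice_eq_sides : K = rside lft (Cl lft K) :&: lside lft (Cr lft K).
Proof.
have pd' := planar_diagram_flip pd; have [_ _ _ KU] := subK.
apply/eqP; rewrite eqEsubset subsetI; apply/andP; split.
  apply/andP; split.
  - exact: (sublattice_subset_rside_Cl pd subK cpK).
  - exact: (sublattice_subset_rside_Cl pd' subK cpK).
apply/subsetP => x; rewrite !inE.
case/andP=> /orP[/andP[-> //]|/exists_inP[c cC cx]].
case/orP=> [/andP[-> //]|/exists_inP[d dC xd]].
apply: contraT => xK; exfalso.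
apply: (join_indecomposable_not_lft_between (subsetP Cl_subset c cC)
  (subsetP Cl_subset d dC) cx xd) => y z yK zK xyz.
by rewrite xyz KU in xK.
Qed.

Lemma sublattice_region : region lft K.
Proof.
have pd' := planar_diagram_flip pd.
exists (Cl lft K), (Cr lft K); split.
- exact: (Cl_maximal_chain pd subK cpK).
- exact: (Cl_maximal_chain pd' subK cpK).
- exact: (subset_trans Cl_subset (sublattice_subset_rside_Cl pd' subK cpK)).
- exact: sublattice_eq_sides.
Qed.

Lemma sublattice_slim : slim_in K.
Proof.
have pd' := planar_diagram_flip pd.
exists [set x in Cl lft K | join_irrb K x], [set x in Cr lft K | join_irrb K x]; split.
- by apply/subsetP => x /setIdP[/(subsetP Cl_subset)].
- by apply/subsetP => x /setIdP[/(subsetP Cl_subset)].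
- by move=> a b /setIdP[aC _] /setIdP[bC _]; apply: (Cl_chain pd _ _ aC bC).
- by move=> a b /setIdP[aC _] /setIdP[bC _]; apply: (Cl_chain pd' _ _ aC bC).
move=> x; split; last by rewrite !inE => /orP[] /andP[_ /join_irr_inP].
move=> ji; have [xK _ irrx] := ji; rewrite !inE (introT (join_irr_inP _ _) ji) !andbT.
apply: contraT; rewrite negb_or xK /= !negbK.
case/andP=> /exists_inP[c cK cx] /exists_inP[d dK xd].
by case: (join_indecomposable_not_lft_between cK dK cx xd irrx).
Qed.

End CoverPreservingSublattice.

Theorem mainTheorem3 (disp : Order.disp_t) (L : finTBLatticeType disp)
    (lft : rel L) (K : {set L}) :
  planar_diagram lft ->
  slim_in [set: L] -> semimodular_in [set: L] ->
  sublattice01 K -> cover_preserving K ->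
  [/\ slim_in K, semimodular_in K, region lft K &
      K = rside lft (Cl lft K) :&: lside lft (Cr lft K)].
Proof.
move=> pd slimL smL subK cpK; split.
- exact: (sublattice_slim subK cpK smL slimL pd).
- exact: (sublattice_semimodular subK cpK smL).
- exact: (sublattice_region subK cpK smL slimL pd).
- exact: (sublattice_eq_sides subK cpK smL slimL pd).
Qed.
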